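(* Let $v\ge 2$ and let $(X,\mathcal{A})$ be a $(v,2,1)$-BIBD, i.e. $|X|=v$ and $\mathcal{A}$ is the set of all $2$-subsets of $X$. If $\phi:\mathcal{A}\to Y$ is a weak nesting of $(X,\mathcal{A})$ into a partial $(w,3,2)$-BIBD, where $X\subseteq Y$ and $|Y|=w$, then $w\ge (5v-1)/4$.
   Context: A $(v,k,\lambda)$-BIBD is a pair $(X,\mathcal{A})$ where $X$ is a set of $v$ points and $\mathcal{A}$ is a multiset of $k$-subsets of $X$ (blocks) such that every pair of distinct points lies in exactly $\lambda$ blocks. A partial $(w,k,\lambda)$-BIBD is defined in the same way on $w$ points, except that every pair of distinct points lies in at most $\lambda$ blocks. Given a $(v,k,\lambda)$-BIBD $(X,\mathcal{A})$ and a set $Y\supseteq X$ with $|Y|=w$, a map $\phi:\mathcal{A}\to Y$ is a weak nesting if $\phi(A)\notin A$ for every block $A$ and the multiset of augmented blocks $\{A\cup\{\phi(A)\}:A\in\mathcal{A}\}$ (one for each block of $\mathcal{A}$, with multiplicity) is a partial $(w,k+1,\lambda+1)$-BIBD on point set $Y$. *)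

From mathcomp Require Import all_boot.
Set Implicit Arguments. Unset Strict Implicit. Unset Printing Implicit Defensive.

(* Points live in an ambient finite type T; point sets are {set T};
   a block multiset is a sequence of blocks (multiplicity = number of occurrences). *)

Definition is_BIBD (T : finType) (X : {set T}) (k lam : nat) (B : seq {set T}) : Prop :=
  (forall A, A \in B -> A \subset X /\ #|A| = k) /\
  (forall x y, x \in X -> y \in X -> x != y ->
     count (fun A : {set T} => (x \in A) && (y \in A)) B = lam).

Definition is_partial_BIBD (T : finType) (Y : {set T}) (k lam : nat) (B : seq {set T}) : Prop :=
  (forall A, A \in B -> A \subset Y /\ #|A| = k) /\
  (forall x y, x \in Y -> y \in Y -> x != y ->
     count (fun A : {set T} => (x \in A) && (y \in A)) B <= lam).

Definition weak_nesting (T : finType) (X Y : {set T}) (k lam : nat)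
    (B : seq {set T}) (phi : {set T} -> T) : Prop :=
  X \subset Y /\
  (forall A, A \in B -> phi A \in Y /\ phi A \notin A) /\
  is_partial_BIBD Y k.+1 lam.+1 [seq phi A |: A | A <- B].

From mathcomp Require Import all_boot.
From mathcomp Require Import zify.

Set Implicit Arguments.
Unset Strict Implicit.
Unset Printing Implicit Defensive.

(* Double count the pairs (z, y) with y in a block A and z = phi A: each block
   gives k of them, b k in all.  A pair of points of X is already covered lam
   times by the design, so the augmented blocks cover it at most once more, and
   at most v(v-1)/2 of the pairs have z in X.  A pair {z, y} with z outside X
   is covered only by augmented blocks nested at z, so at most (lam+1)(w-v)v
   of the pairs have z outside X.  For k = 2 and lam = 1, where 2b = v(v-1),
   this gives v(v-1)/2 <= 2(w-v)v, that is 5v - 1 <= 4w. *)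

Lemma count_sum (U : Type) (P : pred U) (s : seq U) :
  count P s = \sum_(a <- s) P a.
Proof. by rewrite -sum1_count big_mkcond. Qed.

Lemma exchange_count (I J U : finType) (S1 : {pred I}) (S2 : {pred J})
    (Q : I -> J -> pred U) (s : seq U) :
  \sum_(x in S1) \sum_(y in S2) count (Q x y) s =
  \sum_(a <- s) \sum_(x in S1) \sum_(y in S2) Q x y a.
Proof.
under eq_bigr do under eq_bigr do rewrite count_sum.
by under eq_bigr do rewrite exchange_big; rewrite exchange_big.
Qed.

Section FinsetSums.
Variable T : finType.

Lemma sum_restrict (S A : {set T}) (F : T -> nat) :
  A \subset S -> \sum_(x in S) (x \in A) * F x = \sum_(x in A) F x.
Proof.
move=> /subsetP AS; rewrite big_mkcond [RHS]big_mkcond; apply: eq_bigr => x _.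
by case: (boolP (x \in A)) => [/AS -> | _]; rewrite ?mul1n // mul0n; case: ifP.
Qed.

Lemma sum_ordered_pairs (S : {set T}) :
  \sum_(x in S) \sum_(y in S) (x != y : nat) = #|S| * (#|S| - 1).
Proof.
rewrite -sum_nat_const; apply: eq_bigr => x xS.
rewrite (bigD1 x) //= eqxx add0n (cardsD1 x S) xS add1n subn1 /= -sum1_card.
by apply: eq_big => [y | y /andP[_ yx]]; rewrite ?inE 1?andbC // eq_sym yx.
Qed.

End FinsetSums.

Section NestCount.
Variables (T : finType) (B : seq {set T}) (phi : {set T} -> T).

Definition nest_count (z y : T) : nat :=
  count (fun A => (phi A == z) && (y \in A)) B.

Lemma sum_nest_count (X Y : {set T}) :
    {in B, forall A : {set T}, A \subset X} ->
    {in B, forall A : {set T}, phi A \in Y} ->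
  \sum_(z in Y) \sum_(y in X) nest_count z y = \sum_(A <- B) #|A|.
Proof.
move=> sub_X phi_Y; rewrite exchange_count big_seq [RHS]big_seq.
apply: eq_bigr => A AB; rewrite (bigD1 (phi A)) ?phi_Y //= eqxx.
rewrite [X in _ + X]big1 => [|z /andP[_ zA]]; last first.
  by apply: big1 => y _; rewrite eq_sym (negbTE zA).
rewrite addn0 -sum1_card -(sum_restrict (fun=> 1) (sub_X A AB)).
by apply: eq_bigr => y _; rewrite muln1.
Qed.

Hypothesis phi_notin : {in B, forall A : {set T}, phi A \notin A}.

Lemma nest_count_diag z : nest_count z z = 0.
Proof.
apply/eqP; rewrite eqn0Ngt -has_count; apply/hasPn => A AB /=.
by case: eqP => // <-; apply: phi_notin.
Qed.

Lemma count_pair_nested (x y : T) : x != y ->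
  count (fun A : {set T} => (x \in A) && (y \in A)) [seq phi A |: A | A <- B] =
  count (fun A : {set T} => (x \in A) && (y \in A)) B
  + (nest_count x y + nest_count y x).
Proof.
move=> neq_xy; rewrite count_map /nest_count !count_sum -!big_split /=.
rewrite big_seq [RHS]big_seq; apply: eq_bigr => A /phi_notin phiA.
rewrite /preim /= !in_setU1 !(eq_sym (phi A)).
move: neq_xy; have [-> | _] := eqVneq x (phi A);
  have [-> | _] := eqVneq y (phi A);
  by rewrite ?eqxx ?(negbTE phiA) /= ?andbT ?andbF ?addn0.
Qed.

End NestCount.

Lemma BIBD_size (T : finType) (X : {set T}) (k lam : nat) (B : seq {set T}) :
  is_BIBD X k lam B -> size B * (k * (k - 1)) = lam * (#|X| * (#|X| - 1)).
Proof.
move=> [blocks pairs].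
have pair_sum : \sum_(x in X) \sum_(y in X)
    count (fun A : {set T} => (x \in A) && (y \in A) && (x != y)) B
    = lam * (#|X| * (#|X| - 1)).
  rewrite -sum_ordered_pairs big_distrr /=; apply: eq_bigr => x xX.
  rewrite big_distrr /=; apply: eq_bigr => y yX.
  have [<- | xy] := eqVneq x y.
    by rewrite muln0 (eq_count (a2 := pred0)) ?count_pred0 // => A; rewrite andbF.
  by rewrite muln1 -(pairs x y xX yX xy); apply: eq_count => A; rewrite andbT.
rewrite -pair_sum exchange_count -sum1_size big_distrl /= big_seq [RHS]big_seq.
apply: eq_bigr => A AB; have [AX <-] := blocks A AB.
rewrite mul1n -sum_ordered_pairs -(sum_restrict _ AX); apply: eq_bigr => x _.
rewrite -(sum_restrict _ AX) big_distrr /=; apply: eq_bigr => y _.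
by rewrite -!mulnb mulnA.
Qed.

Section WeakNesting.
Variables (T : finType) (X Y : {set T}) (k lam : nat).
Variables (B : seq {set T}) (phi : {set T} -> T).
Hypotheses (design : is_BIBD X k lam B) (nesting : weak_nesting X Y k lam B phi).

Local Notation c := (nest_count B phi).

Let blocks_sub : {in B, forall A : {set T}, A \subset X}.
Proof. by move=> A /design.1[]. Qed.

Let phi_Y : {in B, forall A : {set T}, phi A \in Y}.
Proof. by move=> A /nesting.2.1[]. Qed.

Let phi_notin : {in B, forall A : {set T}, phi A \notin A}.
Proof. by move=> A /nesting.2.1[]. Qed.

Let X_Y : {subset X <= Y}.
Proof. exact/subsetP/nesting.1. Qed.

Let aug_pairs := nesting.2.2.2.

Lemma sum_nest_count_split :
  \sum_(z in X) \sum_(y in X) c z y + \sum_(z in Y :\: X) \sum_(y in X) c z y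
  = size B * k.
Proof.
rewrite -{1}(setIidPr nesting.1) -big_setID sum_nest_count //.
rewrite -sum1_size big_distrl big_seq [RHS]big_seq /=.
by apply: eq_bigr => A /design.1[_ ->]; rewrite mul1n.
Qed.

Lemma sum_nest_count_inside :
  2 * \sum_(z in X) \sum_(y in X) c z y <= #|X| * (#|X| - 1).
Proof.
have -> : 2 * \sum_(z in X) \sum_(y in X) c z y =
          \sum_(z in X) \sum_(y in X) (c z y + c y z).
  under [RHS]eq_bigr do rewrite big_split.
  by rewrite big_split /= [X in _ + X]exchange_big addnn mul2n.
rewrite -sum_ordered_pairs; apply: leq_sum => x xX; apply: leq_sum => y yX.
have [<- | xy] := eqVneq x y; first by rewrite nest_count_diag.
have := aug_pairs (X_Y xX) (X_Y yX) xy.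
by rewrite count_pair_nested // design.2 // -addn1 leq_add2l.
Qed.

Lemma sum_nest_count_outside :
  \sum_(z in Y :\: X) \sum_(y in X) c z y <= lam.+1 * (#|Y :\: X| * #|X|).
Proof.
have -> : lam.+1 * (#|Y :\: X| * #|X|) =
          \sum_(z in Y :\: X) \sum_(y in X) lam.+1 by rewrite !sum_nat_const; lia.
apply: leq_sum => z; rewrite inE => /andP[zX zY]; apply: leq_sum => y yX.
have yz : y != z by apply: contraNneq zX => <-.
apply: leq_trans (aug_pairs (X_Y yX) zY yz).
by rewrite count_pair_nested // addnA leq_addl.
Qed.

Lemma weak_nesting_size_bound :
  2 * (size B * k) <= #|X| * (#|X| - 1) + 2 * (lam.+1 * (#|Y :\: X| * #|X|)).
Proof.
have := sum_nest_count_inside; have := sum_nest_count_outside.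
rewrite -sum_nest_count_split; lia.
Qed.

End WeakNesting.

Theorem lemma2p1 (T : finType) (X Y : {set T}) (B : seq {set T})
    (phi : {set T} -> T) :
  2 <= #|X| ->
  is_BIBD X 2 1 B ->
  X \subset Y ->
  weak_nesting X Y 2 1 B phi ->
  5 * #|X| - 1 <= 4 * #|Y|.
Proof.
move=> v_ge2 design XY nesting.
have := weak_nesting_size_bound design nesting.
have := BIBD_size design.
rewrite cardsD (setIidPr XY) => size_B size_bound.
have : #|X| * (#|X| - 1) <= #|X| * (4 * (#|Y| - #|X|)) by nia.
rewrite leq_pmul2l; lia.
Qed.
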